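(* Let $(L,M,N,P)$ be a crossed square with maps $\lambda,\lambda',\mu,\nu$ and function $h$. Let $L\rtimes N$ and $M\rtimes P$ be the semidirect products (with $N$ acting on $L$ via $\nu$), i.e. $(l,n)+(l',n')=(l+n\cdot l',n+n')$ and $(m,p)+(m',p')=(m+p\cdot m',p+p')$. Let $M\rtimes P$ act on $L\rtimes N$ by $(m,p)\cdot(l,n)=(m\cdot(p\cdot l)+h(m,p\cdot n),\ p\cdot n)$. Then $C_1=(L\rtimes N,M\rtimes P,\lambda\times\nu)$ and $C_0=(N,P,\nu)$ are crossed modules, and together with $s_A(l,n)=n$, $s_B(m,p)=p$, $t_A(l,n)=\lambda'(l)+n$, $t_B(m,p)=\mu(m)+p$, $\varepsilon_A(n)=(0,n)$, $\varepsilon_B(p)=(0,p)$ and compositions $(l',\lambda'(l)+n)\circ(l,n)=(l'+l,n)$, $(m',\mu(m)+p)\circ(m,p)=(m'+m,p)$, they form an internal category in $\mathsf{XMod}$.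
   Context: Groups are written additively. A crossed module $(A,B,\alpha)$: groups $A,B$, a left action of $B$ on $A$ by automorphisms, a homomorphism $\alpha:A\to B$ with $\alpha(b\cdot a)=b+\alpha(a)-b$ and $\alpha(a)\cdot a'=a+a'-a$. Morphisms $\langle f_A,f_B\rangle$ are pairs of homomorphisms with $f_B\alpha=\alpha'f_A$, $f_A(b\cdot a)=f_B(b)\cdot f_A(a)$. An internal category in $\mathsf{XMod}$ consists of crossed modules $C_1=(A_1,B_1,\alpha_1)$, $C_0=(A_0,B_0,\alpha_0)$ and crossed module morphisms $s=\langle s_A,s_B\rangle, t=\langle t_A,t_B\rangle:C_1\to C_0$, $\varepsilon=\langle\varepsilon_A,\varepsilon_B\rangle:C_0\to C_1$, $m=\langle m_A,m_B\rangle:C_1\,{}_s\!\times_t C_1\to C_1$ (pullback computed componentwise, pairs $(x,y)$ with $s(x)=t(y)$, componentwise action; $m(x,y)$ written $x\circ y$) satisfying $s\varepsilon=t\varepsilon=1$, $sm=s\pi_2$, $tm=t\pi_1$, associativity and unit laws $m(\varepsilon s,1)=m(1,\varepsilon t)=1$. A crossed square: homomorphisms $\lambda:L\to M$, $\lambda':L\to N$, $\mu:M\to P$, $\nu:N\to P$ with $\nu\lambda'=\mu\lambda$, left actions of $P$ on $L,M,N$ (inducing actions of $M$ on $L,N$ via $\mu$ and of $N$ on $L,M$ via $\nu$, e.g. $m\cdot l=\mu(m)\cdot l$), and $h:M\times N\to L$, such that (i) $\lambda,\lambda'$ are $P$-equivariant and $\mu$, $\nu$, $\mu\lambda$ are crossed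 modules; (ii) $\lambda h(m,n)=m+n\cdot(-m)$, $\lambda'h(m,n)=m\cdot n-n$; (iii) $h(\lambda(l),n)=l+n\cdot(-l)$, $h(m,\lambda'(l))=m\cdot l-l$; (iv) $h(m+m',n)=m\cdot h(m',n)+h(m,n)$, $h(m,n+n')=h(m,n)+n\cdot h(m,n')$; (v) $h(p\cdot m,p\cdot n)=p\cdot h(m,n)$. *)

Set Implicit Arguments.
Unset Strict Implicit.

Record GOps := { car :> Type; gadd : car -> car -> car; gzero : car; gopp : car -> car }.
Arguments gadd {g} _ _.
Arguments gzero {g}.
Arguments gopp {g} _.

Definition is_group (G : GOps) : Prop :=
  (forall x y z : G, gadd x (gadd y z) = gadd (gadd x y) z) /\
  (forall x : G, gadd gzero x = x) /\ (forall x : G, gadd x gzero = x) /\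
  (forall x : G, gadd (gopp x) x = gzero) /\ (forall x : G, gadd x (gopp x) = gzero).

Definition is_hom (G H : GOps) (f : G -> H) : Prop :=
  forall x y, f (gadd x y) = gadd (f x) (f y).

Definition is_action (B A : GOps) (act : B -> A -> A) : Prop :=
  (forall a, act gzero a = a) /\
  (forall b b' a, act (gadd b b') a = act b (act b' a)) /\
  (forall b a a', act b (gadd a a') = gadd (act b a) (act b a')).

Definition is_xmod (A B : GOps) (act : B -> A -> A) (alpha : A -> B) : Prop :=
  is_group A /\ is_group B /\ is_action act /\ is_hom alpha /\
  (forall b a, alpha (act b a) = gadd (gadd b (alpha a)) (gopp b)) /\
  (forall a a', act (alpha a) a' = gadd (gadd a a') (gopp a)).

Definition is_xmod_mor (A B : GOps) (act : B -> A -> A) (alpha : A -> B)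
  (A' B' : GOps) (act' : B' -> A' -> A') (alpha' : A' -> B')
  (fA : A -> A') (fB : B -> B') : Prop :=
  is_hom fA /\ is_hom fB /\
  (forall a, fB (alpha a) = alpha' (fA a)) /\
  (forall b a, fA (act b a) = act' (fB b) (fA a)).

(** The pullback C1 _s x_t C1 is the sub-crossed
    module of pairs (x,y) with s x = t y (componentwise operations and action);
    m = <mA, mB> is given by total binary functions, of which only the values on
    the pullback matter.  "m is a crossed-module morphism from the pullback" is
    written out componentwise. *)
Definition is_internal_cat
  (A1 B1 : GOps) (act1 : B1 -> A1 -> A1) (alpha1 : A1 -> B1)
  (A0 B0 : GOps) (act0 : B0 -> A0 -> A0) (alpha0 : A0 -> B0)
  (sA tA : A1 -> A0) (sB tB : B1 -> B0)
  (eA : A0 -> A1) (eB : B0 -> B1)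
  (mA : A1 -> A1 -> A1) (mB : B1 -> B1 -> B1) : Prop :=
  let pbA x y := sA x = tA y in
  let pbB x y := sB x = tB y in
  is_xmod act1 alpha1 /\ is_xmod act0 alpha0 /\
  is_xmod_mor act1 alpha1 act0 alpha0 sA sB /\
  is_xmod_mor act1 alpha1 act0 alpha0 tA tB /\
  is_xmod_mor act0 alpha0 act1 alpha1 eA eB /\
  (forall x y x' y', pbA x y -> pbA x' y' ->
      mA (gadd x x') (gadd y y') = gadd (mA x y) (mA x' y')) /\
  (forall x y x' y', pbB x y -> pbB x' y' ->
      mB (gadd x x') (gadd y y') = gadd (mB x y) (mB x' y')) /\
  (forall x y, pbA x y -> mB (alpha1 x) (alpha1 y) = alpha1 (mA x y)) /\
  (forall b b' x y, pbB b b' -> pbA x y ->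
      mA (act1 b x) (act1 b' y) = act1 (mB b b') (mA x y)) /\
  (forall a, sA (eA a) = a) /\ (forall b, sB (eB b) = b) /\
  (forall a, tA (eA a) = a) /\ (forall b, tB (eB b) = b) /\
  (forall x y, pbA x y -> sA (mA x y) = sA y) /\
  (forall x y, pbB x y -> sB (mB x y) = sB y) /\
  (forall x y, pbA x y -> tA (mA x y) = tA x) /\
  (forall x y, pbB x y -> tB (mB x y) = tB x) /\
  (forall x y z, pbA x y -> pbA y z -> mA (mA x y) z = mA x (mA y z)) /\
  (forall x y z, pbB x y -> pbB y z -> mB (mB x y) z = mB x (mB y z)) /\
  (forall x, mA (eA (tA x)) x = x) /\ (forall x, mA x (eA (sA x)) = x) /\
  (forall x, mB (eB (tB x)) x = x) /\ (forall x, mB x (eB (sB x)) = x).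

Definition is_crossed_square (L M N P : GOps)
  (lam : L -> M) (lam' : L -> N) (mu : M -> P) (nu : N -> P)
  (actL : P -> L -> L) (actM : P -> M -> M) (actN : P -> N -> N)
  (h : M -> N -> L) : Prop :=
  is_hom lam /\ is_hom lam' /\ is_hom mu /\ is_hom nu /\
  (forall l, nu (lam' l) = mu (lam l)) /\
  (* (i) *)
  (forall p l, lam (actL p l) = actM p (lam l)) /\
  (forall p l, lam' (actL p l) = actN p (lam' l)) /\
  is_xmod actM mu /\ is_xmod actN nu /\ is_xmod actL (fun l => mu (lam l)) /\
  (* (ii) *)
  (forall m n, lam (h m n) = gadd m (actM (nu n) (gopp m))) /\
  (forall m n, lam' (h m n) = gadd (actN (mu m) n) (gopp n)) /\
  (* (iii) *)
  (forall l n, h (lam l) n = gadd l (actL (nu n) (gopp l))) /\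
  (forall m l, h m (lam' l) = gadd (actL (mu m) l) (gopp l)) /\
  (* (iv) *)
  (forall m m' n, h (gadd m m') n = gadd (actL (mu m) (h m' n)) (h m n)) /\
  (forall m n n', h m (gadd n n') = gadd (h m n) (actL (nu n) (h m n'))) /\
  (* (v) *)
  (forall p m n, h (actM p m) (actN p n) = actL p (h m n)).

Definition sdp (G H : GOps) (act : H -> G -> G) : GOps :=
  {| car := (car G * car H)%type;
     gadd := fun x y => (gadd (fst x) (act (snd x) (fst y)), gadd (snd x) (snd y));
     gzero := (gzero, gzero);
     gopp := fun x => (act (gopp (snd x)) (gopp (fst x)), gopp (snd x)) |}.

(* Both semidirect products carry the composition of the cat^1-group of a crossed
   module: over matching targets, adding first components is a homomorphism because
   the Peiffer identity of L -> P (resp. M -> P) absorbs the twist of the action.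
   What is specific to crossed squares is the action of M x| P on L x| N built from h:
   that it is an action and makes lam x nu a crossed module, and that source, target,
   units and composition respect it, all reduce to the axioms (ii)-(v) of h, with
   composition needing (iv) in the twisted form h_addl_twisted. *)

From Stdlib Require Import Setoid.
Set Implicit Arguments.
Unset Strict Implicit.

Section GroupFacts.
Variable G : GOps.
Hypothesis HG : is_group G.

Lemma gaddA (x y z : G) : gadd (gadd x y) z = gadd x (gadd y z).
Proof. symmetry; apply HG. Qed.
Lemma gadd0l (x : G) : gadd gzero x = x.
Proof. apply HG. Qed.
Lemma gadd0r (x : G) : gadd x gzero = x.
Proof. apply HG. Qed.
Lemma gaddNl (x : G) : gadd (gopp x) x = gzero.
Proof. apply HG. Qed.
Lemma gaddNr (x : G) : gadd x (gopp x) = gzero.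
Proof. apply HG. Qed.

Lemma gaddKr (x y : G) : gadd (gopp x) (gadd x y) = y.
Proof. now rewrite <- gaddA, gaddNl, gadd0l. Qed.

Lemma gaddrI (x y z : G) : gadd x y = gadd x z -> y = z.
Proof. intro E. now rewrite <- (gaddKr x y), E, gaddKr. Qed.
Lemma gaddIr (x y z : G) : gadd y x = gadd z x -> y = z.
Proof. intro E. now rewrite <- (gadd0r y), <- (gaddNr x), <- gaddA, E, gaddA, gaddNr, gadd0r. Qed.

Lemma gopp_uniq (x y : G) : gadd x y = gzero -> y = gopp x.
Proof. intro E. apply (@gaddrI x). now rewrite E, gaddNr. Qed.
End GroupFacts.

Section HomFacts.
Variables (G H : GOps) (f : G -> H).
Hypotheses (HG : is_group G) (HH : is_group H) (Hf : is_hom f).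

Lemma hom0 : f gzero = gzero.
Proof. apply (gaddrI HH (x := f gzero)). now rewrite <- Hf, (gadd0r HG), (gadd0r HH). Qed.
Lemma homN (x : G) : f (gopp x) = gopp (f x).
Proof. apply (gopp_uniq HH). now rewrite <- Hf, (gaddNr HG), hom0. Qed.
End HomFacts.

Section ActionFacts.
Variables (A B : GOps) (act : B -> A -> A).
Hypothesis Hact : is_action act.

Lemma act0l (a : A) : act gzero a = a.
Proof. apply Hact. Qed.
Lemma actDl (b b' : B) (a : A) : act (gadd b b') a = act b (act b' a).
Proof. apply Hact. Qed.
Lemma actDr (b : B) (a a' : A) : act b (gadd a a') = gadd (act b a) (act b a').
Proof. apply Hact. Qed.

Lemma act0r (HA : is_group A) (b : B) : act b gzero = gzero.
Proof. apply (gaddrI HA (x := act b gzero)). now rewrite <- actDr, !(gadd0r HA). Qed.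
Lemma actK (HB : is_group B) (b : B) (a : A) : act (gopp b) (act b a) = a.
Proof. now rewrite <- actDl, (gaddNl HB), act0l. Qed.
Lemma actKV (HB : is_group B) (b : B) (a : A) : act b (act (gopp b) a) = a.
Proof. now rewrite <- actDl, (gaddNr HB), act0l. Qed.

Lemma sdp_inr_hom (HA : is_group A) : is_hom (fun b => (gzero, b) : sdp act).
Proof. intros b b'; simpl. now rewrite (act0r HA), (gadd0l HA). Qed.

Lemma action_comp (C : GOps) (f : C -> B) :
  is_group C -> is_group B -> is_hom f -> is_action (fun c => act (f c)).
Proof.
  intros HC HB Hf; repeat split.
  - intro a. now rewrite (hom0 HC HB Hf), act0l.
  - intros c c' a. now rewrite Hf, actDl.
  - intros c a a'. apply actDr.
Qed.

Lemma sdp_group : is_group A -> is_group B -> is_group (sdp act).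
Proof.
  intros HA HB; repeat split; simpl.
  - intros [a b] [a' b'] [a'' b'']; simpl. f_equal.
    + now rewrite actDr, actDl, (gaddA HA).
    + now rewrite (gaddA HB).
  - intros [a b]; simpl. now rewrite act0l, (gadd0l HA), (gadd0l HB).
  - intros [a b]; simpl. now rewrite (act0r HA), (gadd0r HA), (gadd0r HB).
  - intros [a b]; simpl. now rewrite <- actDr, (gaddNl HA), (act0r HA), (gaddNl HB).
  - intros [a b]; simpl. now rewrite (actKV HB), (gaddNr HA), (gaddNr HB).
Qed.
End ActionFacts.

Section CrossedModuleFacts.
Variables (A B : GOps) (act : B -> A -> A) (alpha : A -> B).
Hypothesis HX : is_xmod act alpha.

Let HA : is_group A. Proof. apply HX. Qed.
Let HB : is_group B. Proof. apply HX. Qed.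
Let Hact : is_action act. Proof. apply HX. Qed.

Lemma xmod_add_conj (a a' : A) : gadd a a' = gadd a' (act (gopp (alpha a')) a).
Proof.
  rewrite <- (actKV Hact HB (alpha a') a) at 1.
  destruct HX as (_ & _ & _ & _ & _ & Peiffer).
  now rewrite Peiffer, !(gaddA HA), (gaddNl HA), (gadd0r HA).
Qed.

Lemma xmod_act_alpha (X : GOps) (actX : B -> X -> X) (b : B) (a : A) (x : X) :
  is_action actX -> actX b (actX (alpha a) x) = actX (alpha (act b a)) (actX b x).
Proof.
  intro HactX. destruct HX as (_ & _ & _ & _ & equiv & _).
  now rewrite equiv, !(actDl HactX), (actK HactX HB).
Qed.
End CrossedModuleFacts.

Definition comp (G H : GOps) (x y : G * H) : G * H := (gadd (fst x) (fst y), snd y).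
Definition tgt (G H : GOps) (f : G -> H) (x : G * H) : H := gadd (f (fst x)) (snd x).

Section Composition.
Variables (G H : GOps) (f : G -> H).
Hypotheses (HG : is_group G) (HH : is_group H) (Hf : is_hom f).

Lemma comp_assoc (x y z : G * H) : comp (comp x y) z = comp x (comp y z).
Proof. unfold comp; simpl. now rewrite (gaddA HG). Qed.
Lemma comp_unitl (k : H) (x : G * H) : comp (gzero, k) x = x.
Proof. destruct x; unfold comp; simpl. now rewrite (gadd0l HG). Qed.
Lemma comp_unitr (x : G * H) : comp x (gzero, snd x) = x.
Proof. destruct x; unfold comp; simpl. now rewrite (gadd0r HG). Qed.

Lemma tgt_unit (k : H) : tgt f (gzero, k) = k.
Proof. unfold tgt; simpl. now rewrite (hom0 HG HH Hf), (gadd0l HH). Qed.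
Lemma tgt_comp (x y : G * H) : snd x = tgt f y -> tgt f (comp x y) = tgt f x.
Proof.
  destruct x as [a c], y as [a' c']; unfold tgt, comp; simpl; intros ->.
  now rewrite Hf, (gaddA HH).
Qed.
End Composition.

(* The cat^1-group of a crossed module (A, B, alpha), for A x| C with the action
   pulled back along g and target [tgt f], where alpha = g o f. *)
Section SemidirectComposition.
Variables (A B C : GOps) (act : B -> A -> A) (alpha : A -> B) (g : C -> B) (f : A -> C).
Hypotheses (HX : is_xmod act alpha) (HC : is_group C) (Hg : is_hom g) (Hf : is_hom f).
Hypothesis Hgf : forall a, g (f a) = alpha a.
Hypothesis f_conj : forall c a, f (act (g c) a) = gadd (gadd c (f a)) (gopp c).

Local Notation AxC := (sdp (fun c => act (g c))).

Let HA : is_group A. Proof. apply HX. Qed.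
Let Hact : is_action act. Proof. apply HX. Qed.
Let Peiffer : forall a a', act (alpha a) a' = gadd (gadd a a') (gopp a). Proof. apply HX. Qed.

Lemma tgt_sdp_hom : is_hom (tgt f : AxC -> C).
Proof.
  intros [a c] [a' c']; unfold tgt; simpl.
  now rewrite Hf, f_conj, !(gaddA HC), (gaddKr HC).
Qed.

Lemma comp_sdp_add (x y x' y' : AxC) :
  snd x = tgt f y -> comp (gadd x x') (gadd y y') = gadd (comp x y : AxC) (comp x' y').
Proof.
  destruct x as [a1 c1], y as [a2 c2], x' as [a1' c1'], y' as [a2' c2'].
  unfold tgt, comp; simpl; intros ->. f_equal.
  now rewrite Hg, Hgf, (actDl Hact), Peiffer, (actDr Hact), !(gaddA HA), (gaddKr HA).
Qed.
End SemidirectComposition.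

Section CrossedSquare.
Variables (L M N P : GOps) (lam : L -> M) (lam' : L -> N) (mu : M -> P) (nu : N -> P)
  (actL : P -> L -> L) (actM : P -> M -> M) (actN : P -> N -> N) (h : M -> N -> L).
Hypothesis HCS : is_crossed_square lam lam' mu nu actL actM actN h.

Let lam_hom : is_hom lam. Proof. apply HCS. Qed.
Let lam'_hom : is_hom lam'. Proof. apply HCS. Qed.
Let mu_hom : is_hom mu. Proof. apply HCS. Qed.
Let nu_hom : is_hom nu. Proof. apply HCS. Qed.
Let nu_lam' : forall l, nu (lam' l) = mu (lam l). Proof. apply HCS. Qed.
Let lam_equiv : forall p l, lam (actL p l) = actM p (lam l). Proof. apply HCS. Qed.
Let lam'_equiv : forall p l, lam' (actL p l) = actN p (lam' l). Proof. apply HCS. Qed.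
Let XM : is_xmod actM mu. Proof. apply HCS. Qed.
Let XN : is_xmod actN nu. Proof. apply HCS. Qed.
Let XL : is_xmod actL (fun l => mu (lam l)). Proof. apply HCS. Qed.
Let lam_h : forall m n, lam (h m n) = gadd m (actM (nu n) (gopp m)). Proof. apply HCS. Qed.
Let lam'_h : forall m n, lam' (h m n) = gadd (actN (mu m) n) (gopp n). Proof. apply HCS. Qed.
Let h_laml : forall l n, h (lam l) n = gadd l (actL (nu n) (gopp l)). Proof. apply HCS. Qed.
Let h_lam'r : forall m l, h m (lam' l) = gadd (actL (mu m) l) (gopp l). Proof. apply HCS. Qed.
Let h_addl : forall m m' n, h (gadd m m') n = gadd (actL (mu m) (h m' n)) (h m n).
Proof. apply HCS. Qed.
Let h_addr : forall m n n', h m (gadd n n') = gadd (h m n) (actL (nu n) (h m n')).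
Proof. apply HCS. Qed.
Let h_equiv : forall p m n, h (actM p m) (actN p n) = actL p (h m n). Proof. apply HCS. Qed.

Let GL : is_group L. Proof. apply XL. Qed.
Let GM : is_group M. Proof. apply XM. Qed.
Let GN : is_group N. Proof. apply XN. Qed.
Let GP : is_group P. Proof. apply XM. Qed.
Let AL : is_action actL. Proof. apply XL. Qed.
Let AM : is_action actM. Proof. apply XM. Qed.
Let AN : is_action actN. Proof. apply XN. Qed.
Let mu_equiv : forall p m, mu (actM p m) = gadd (gadd p (mu m)) (gopp p). Proof. apply XM. Qed.
Let nu_equiv : forall p n, nu (actN p n) = gadd (gadd p (nu n)) (gopp p). Proof. apply XN. Qed.
Let M_Peiffer : forall m m', actM (mu m) m' = gadd (gadd m m') (gopp m). Proof. apply XM. Qed.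
Let N_Peiffer : forall n n', actN (nu n) n' = gadd (gadd n n') (gopp n). Proof. apply XN. Qed.
Let L_Peiffer : forall l l', actL (mu (lam l)) l' = gadd (gadd l l') (gopp l). Proof. apply XL. Qed.

Lemma h_0l (n : N) : h gzero n = gzero.
Proof.
  pose proof (h_addl gzero gzero n) as E.
  rewrite (gadd0l GM), (hom0 GM GP mu_hom), (act0l AL) in E.
  apply (gaddIr GL (x := h gzero n)). now rewrite (gadd0l GL).
Qed.

(* (iv) with the twisted argument moved to N, via m1 + m2 = m2 + (-mu m2).m1 and (v). *)
Lemma h_addl_twisted (m1 m2 : M) (n : N) :
  h (gadd m1 m2) n = gadd (h m1 (actN (mu m2) n)) (h m2 n).
Proof.
  rewrite (xmod_add_conj XM), h_addl, <- h_equiv.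
  now rewrite (actKV AM GP).
Qed.

Lemma h_conj_act (m : M) (n : N) (l : L) :
  actL (mu m) (actL (nu n) l) = gadd (gadd (h m n) (actL (nu n) (actL (mu m) l))) (gopp (h m n)).
Proof.
  rewrite <- L_Peiffer, lam_h, mu_hom, mu_equiv, (homN GM GP mu_hom), !(actDl AL).
  now rewrite !(actK AL GP).
Qed.

Lemma h_act_commute (m : M) (n : N) (l l' : L) :
  gadd (actL (mu m) (actL (nu n) l)) (gadd (h m n) l')
  = gadd (h m n) (gadd (actL (nu n) (actL (mu m) l)) l').
Proof. now rewrite h_conj_act, !(gaddA GL), (gaddKr GL). Qed.

Local Notation LxN := (sdp (fun n => actL (nu n))).
Local Notation MxP := (sdp actM).

Definition act1 (x : MxP) (y : LxN) : LxN :=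
  (gadd (actL (mu (fst x)) (actL (snd x) (fst y))) (h (fst x) (actN (snd x) (snd y))),
   actN (snd x) (snd y)).
Definition alpha1 (y : LxN) : MxP := (lam (fst y), nu (snd y)).

Let AL_nu : is_action (fun n => actL (nu n)). Proof. exact (action_comp AL GN GP nu_hom). Qed.
Let GLN : is_group LxN. Proof. exact (sdp_group AL_nu GL GN). Qed.
Let GMP : is_group MxP. Proof. exact (sdp_group AM GM GP). Qed.

Lemma act1_action : is_action act1.
Proof.
  unfold act1; repeat split.
  - intros [l n]; simpl.
    now rewrite (hom0 GM GP mu_hom), !(act0l AL), (act0l AN), h_0l, (gadd0r GL).
  - intros [m p] [m' p'] [l n]; simpl.
    rewrite h_addl, !(actDl AN), h_equiv, mu_hom, mu_equiv, !(actDl AL), (actK AL GP).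
    now rewrite !(actDr AL), !(gaddA GL).
  - intros [m p] [l n] [l' n']; simpl.
    rewrite !(actDr AL), !(actDr AN), h_addr, (xmod_act_alpha XN _ _ _ AL), !(gaddA GL).
    now rewrite h_act_commute.
Qed.

Lemma alpha1_hom : is_hom alpha1.
Proof. intros [l n] [l' n']; unfold alpha1; simpl. now rewrite lam_hom, lam_equiv, nu_hom. Qed.

Lemma alpha1_equiv (x : MxP) (y : LxN) : alpha1 (act1 x y) = gadd (gadd x (alpha1 y)) (gopp x).
Proof.
  destruct x as [m p], y as [l n]; unfold alpha1, act1; simpl.
  rewrite lam_hom, !lam_equiv, M_Peiffer, lam_h, nu_equiv, !(actDl AM), !(gaddA GM).
  now rewrite (gaddKr GM).
Qed.

Lemma act1_Peiffer (y y' : LxN) : act1 (alpha1 y) y' = gadd (gadd y y') (gopp y).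
Proof.
  destruct y as [l n], y' as [l' n']; unfold alpha1, act1; simpl.
  rewrite L_Peiffer, h_laml, N_Peiffer, !nu_hom, !(homN GN GP nu_hom), !(actDl AL), !(gaddA GL).
  now rewrite (gaddKr GL).
Qed.

Lemma xmod_C1 : is_xmod act1 alpha1.
Proof.
  exact (conj GLN (conj GMP (conj act1_action
           (conj alpha1_hom (conj alpha1_equiv act1_Peiffer))))).
Qed.

Let lam'_conj : forall n l, lam' (actL (nu n) l) = gadd (gadd n (lam' l)) (gopp n).
Proof. intros n l. now rewrite lam'_equiv, N_Peiffer. Qed.

Lemma tgt_alpha1 (y : LxN) : tgt mu (alpha1 y) = nu (tgt lam' y).
Proof. destruct y as [l n]; unfold tgt, alpha1; simpl. now rewrite nu_hom, nu_lam'. Qed.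

Lemma tgt_act1 (x : MxP) (y : LxN) : tgt lam' (act1 x y) = actN (tgt mu x) (tgt lam' y).
Proof.
  destruct x as [m p], y as [l n]; unfold tgt, act1; simpl.
  rewrite lam'_hom, !lam'_equiv, lam'_h, !(actDl AN), !(actDr AN), !(gaddA GN).
  now rewrite (gaddNl GN), (gadd0r GN).
Qed.

Lemma tgt_xmod_mor : is_xmod_mor act1 alpha1 actN nu (tgt lam') (tgt mu).
Proof.
  split; [exact (tgt_sdp_hom GN lam'_hom lam'_conj) |].
  split; [exact (tgt_sdp_hom (g := fun p => p) GP mu_hom mu_equiv) |].
  split; [exact tgt_alpha1 | exact tgt_act1].
Qed.

Lemma unit_xmod_mor :
  is_xmod_mor actN nu act1 alpha1 (fun n => (gzero, n) : LxN) (fun p => (gzero, p) : MxP).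
Proof.
  split; [exact (sdp_inr_hom AL_nu GL) |].
  split; [exact (sdp_inr_hom AM GM) |].
  split.
  - intro n; unfold alpha1; simpl. now rewrite (hom0 GL GM lam_hom).
  - intros p n; unfold act1; simpl.
    now rewrite (hom0 GM GP mu_hom), (act0l AL), (act0r AL GL), h_0l, (gadd0l GL).
Qed.

Lemma compA_add (x y x' y' : LxN) :
  snd x = tgt lam' y -> comp (gadd x x') (gadd y y') = gadd (comp x y : LxN) (comp x' y').
Proof. exact (comp_sdp_add XL nu_hom nu_lam' x' y'). Qed.

Lemma compB_add (x y x' y' : MxP) :
  snd x = tgt mu y -> comp (gadd x x') (gadd y y') = gadd (comp x y : MxP) (comp x' y').
Proof. exact (comp_sdp_add (g := fun p => p) XM (fun p p' => eq_refl) (fun m => eq_refl) x' y'). Qed.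

Lemma comp_alpha1 (x y : LxN) : comp (alpha1 x) (alpha1 y) = alpha1 (comp x y).
Proof. unfold comp, alpha1; simpl. now rewrite lam_hom. Qed.

Lemma comp_act1 (b b' : MxP) (x y : LxN) :
  snd b = tgt mu b' -> snd x = tgt lam' y ->
  comp (act1 b x) (act1 b' y) = act1 (comp b b') (comp x y).
Proof.
  destruct b as [m1 p1], b' as [m2 p2], x as [l1 n1], y as [l2 n2].
  unfold tgt, comp, act1; simpl; intros -> ->. f_equal.
  rewrite !(actDl AN), !(actDr AN), <- !lam'_equiv, h_addr, h_lam'r, nu_lam', L_Peiffer.
  rewrite mu_hom, !(actDl AL), !(actDr AL), h_addl_twisted, !(gaddA GL).
  now rewrite !(gaddKr GL).
Qed.

End CrossedSquare.

Theorem mainTheorem3 (L M N P : GOps)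
  (lam : L -> M) (lam' : L -> N) (mu : M -> P) (nu : N -> P)
  (actL : P -> L -> L) (actM : P -> M -> M) (actN : P -> N -> N)
  (h : M -> N -> L) :
  is_crossed_square lam lam' mu nu actL actM actN h ->
  let LN := sdp (fun (n : N) (l : L) => actL (nu n) l) in
  let MP := sdp actM in
  let act1 : MP -> LN -> LN := fun mp ln =>
    (gadd (actL (mu (fst mp)) (actL (snd mp) (fst ln)))
          (h (fst mp) (actN (snd mp) (snd ln))),
     actN (snd mp) (snd ln)) in
  let alpha1 : LN -> MP := fun ln => (lam (fst ln), nu (snd ln)) in
  is_internal_cat act1 alpha1 actN nu
    (fun ln : LN => snd ln) (fun ln : LN => gadd (lam' (fst ln)) (snd ln))
    (fun mp : MP => snd mp) (fun mp : MP => gadd (mu (fst mp)) (snd mp))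
    (fun n : N => (gzero, n) : LN) (fun p : P => (gzero, p) : MP)
    (fun x y : LN => (gadd (fst x) (fst y), snd y) : LN)
    (fun x y : MP => (gadd (fst x) (fst y), snd y) : MP).
Proof.
  intros HCS LN MP act1 alpha1.
  assert (GL : is_group L) by apply HCS.
  assert (GM : is_group M) by apply HCS.
  assert (GN : is_group N) by apply HCS.
  assert (GP : is_group P) by apply HCS.
  assert (lam'_hom : is_hom lam') by apply HCS.
  assert (mu_hom : is_hom mu) by apply HCS.
  split; [exact (xmod_C1 HCS) |].
  split; [apply HCS |].
  split; [repeat split; reflexivity |].
  split; [exact (tgt_xmod_mor HCS) |].
  split; [exact (unit_xmod_mor HCS) |].
  split; [intros x y x' y' E _; exact (compA_add HCS x' y' E) |].
  split; [intros x y x' y' E _; exact (compB_add HCS x' y' E) |].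
  split; [intros x y _; exact (comp_alpha1 HCS x y) |].
  split; [exact (comp_act1 HCS) |].
  split; [reflexivity |].
  split; [reflexivity |].
  split; [exact (tgt_unit GL GN lam'_hom) |].
  split; [exact (tgt_unit GM GP mu_hom) |].
  split; [reflexivity |].
  split; [reflexivity |].
  split; [intros x y; apply (tgt_comp GN lam'_hom) |].
  split; [intros x y; apply (tgt_comp GP mu_hom) |].
  split; [intros x y z _ _; exact (comp_assoc GL x y z) |].
  split; [intros x y z _ _; exact (comp_assoc GM x y z) |].
  split; [intro x; apply (comp_unitl GL) |].
  split; [intro x; apply (comp_unitr GL) |].
  split; [intro x; apply (comp_unitl GM) | intro x; apply (comp_unitr GM)].
Qed.
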